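(* Let $(\mathbf r(t),\mathbf v(t))\in\Omega$, $t\ge0$, be a stationary solution of the three-dimensional equations of motion, and let $\mathbf L$ be its (constant) angular momentum. If there is at least one time $t_0\ge0$ at which the minimum possible root-mean-square size of the system is achieved, i.e. $g(\mathbf r(t_0))=W(\mathbf L,T(\mathbf v(t_0)))$, then this trajectory is flat (all particles move in one fixed plane).
   Context: Fix $N\ge2$, masses $m_i>0$, $\gamma>0$. $\mathfrak R_3=\{\mathbf r=(\mathbf r_1,\dots,\mathbf r_N)\in(\mathbb R^3)^N:\mathbf r_i\ne\mathbf r_j,\ i\ne j\}$, phase space $\Omega=\mathfrak R_3\times(\mathbb R^3)^N$. Equations of motion: $\dot{\mathbf r}_i=\mathbf v_i$, $m_i\dot{\mathbf v}_i=\sum_{j\ne i}\gamma m_im_j(\mathbf r_j-\mathbf r_i)/|\mathbf r_j-\mathbf r_i|^3$. A solution is stationary if there are $0<C_1\le C_2<\infty$ with $C_1\le|\mathbf r_j(t)-\mathbf r_i(t)|\le C_2$ for all $i\ne j$, $t\ge0$. $\mathbf L(\mathbf r,\mathbf v)=\sum_im_i\mathbf r_i\times\mathbf v_i$, $T(\mathbf v)=\frac12\sum_im_i|\mathbf v_i|^2$, $g(\mathbf r)=\sum_im_i|\mathbf r_i|^2$ (so the root-mean-square size is $b=\sqrt{g/\sum_jm_j}$). For $\mathbf L\in\mathbb R^3$, $T\ge0$: $W(\mathbf L,T)=\inf\{g(\mathbf r):(\mathbf r,\mathbf v)\in\Omega,\ \mathbf L(\mathbf r,\mathbf v)=\mathbf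 L,\ T(\mathbf v)=T\}$. Since the total energy $T-f$ (with $f(\mathbf r)=\sum_{i<j}\gamma m_im_j/|\mathbf r_j-\mathbf r_i|$) is conserved, $T(\mathbf v(t))$ is determined by the current cohesion $f(\mathbf r(t))$. *)

From Stdlib Require Import Reals Lra List.
From Coquelicot Require Import Coquelicot.
Open Scope R_scope.

Record V3 := mkV3 { vx : R; vy : R; vz : R }.

Definition vadd (a b : V3) := mkV3 (vx a + vx b) (vy a + vy b) (vz a + vz b).
Definition vsub (a b : V3) := mkV3 (vx a - vx b) (vy a - vy b) (vz a - vz b).
Definition vscal (c : R) (a : V3) := mkV3 (c * vx a) (c * vy a) (c * vz a).
Definition vzero := mkV3 0 0 0.
Definition vdot (a b : V3) := vx a * vx b + vy a * vy b + vz a * vz b.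
Definition vcross (a b : V3) :=
  mkV3 (vy a * vz b - vz a * vy b)
       (vz a * vx b - vx a * vz b)
       (vx a * vy b - vy a * vx b).
Definition vnorm (a : V3) := sqrt (vdot a a).

Definition sumR (n : nat) (f : nat -> R) : R :=
  fold_right Rplus 0 (map f (seq 0 n)).
Definition sumV (n : nat) (f : nat -> V3) : V3 :=
  fold_right vadd vzero (map f (seq 0 n)).

(* A configuration of N particles is a map nat -> V3; only indices < N matter. *)
Definition config := nat -> V3.

(* R_3 : pairwise distinct positions; Omega = R_3 x (R^3)^N *)
Definition in_R3 (N : nat) (r : config) : Prop :=
  forall i j, (i < N)%nat -> (j < N)%nat -> i <> j -> r i <> r j.
Definition in_Omega (N : nat) (r v : config) : Prop := in_R3 N r.

Definition angmom (N : nat) (m : nat -> R) (r v : config) : V3 :=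
  sumV N (fun i => vscal (m i) (vcross (r i) (v i))).
Definition kinetic (N : nat) (m : nat -> R) (v : config) : R :=
  / 2 * sumR N (fun i => m i * vdot (v i) (v i)).
Definition gmom (N : nat) (m : nat -> R) (r : config) : R :=
  sumR N (fun i => m i * vdot (r i) (r i)).

Definition Wfun (N : nat) (m : nat -> R) (L : V3) (T : R) : Rbar :=
  Glb_Rbar (fun x => exists r v : config,
              in_Omega N r v /\ angmom N m r v = L /\ kinetic N m v = T /\
              x = gmom N m r).

Definition force (N : nat) (gamma : R) (m : nat -> R) (r : config) (i : nat) : V3 :=
  sumV N (fun j => if Nat.eqb j i then vzero else
     vscal (gamma * m i * m j / (vnorm (vsub (r j) (r i))) ^ 3)
           (vsub (r j) (r i))).

Definition is_derive_V3 (f : R -> V3) (t : R) (d : V3) : Prop :=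
  is_derive (fun s => vx (f s)) t (vx d) /\
  is_derive (fun s => vy (f s)) t (vy d) /\
  is_derive (fun s => vz (f s)) t (vz d).

Definition right_cont_V3 (f : R -> V3) (t : R) : Prop :=
  filterlim (fun s => vx (f s)) (at_right t) (locally (vx (f t))) /\
  filterlim (fun s => vy (f s)) (at_right t) (locally (vy (f t))) /\
  filterlim (fun s => vz (f s)) (at_right t) (locally (vz (f t))).

Definition is_solution (N : nat) (gamma : R) (m : nat -> R)
    (r v : R -> config) : Prop :=
  (forall t, 0 <= t -> in_Omega N (r t) (v t)) /\
  (forall i, (i < N)%nat -> forall t, 0 < t ->
     is_derive_V3 (fun s => r s i) t (v t i) /\
     is_derive_V3 (fun s => vscal (m i) (v s i)) t (force N gamma m (r t) i)) /\
  (forall i, (i < N)%nat ->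
     right_cont_V3 (fun s => r s i) 0 /\ right_cont_V3 (fun s => v s i) 0).

Definition stationary (N : nat) (r : R -> config) : Prop :=
  exists C1 C2, 0 < C1 /\ C1 <= C2 /\
    forall t, 0 <= t -> forall i j, (i < N)%nat -> (j < N)%nat -> i <> j ->
      C1 <= vnorm (vsub (r t j) (r t i)) <= C2.

Definition flat (N : nat) (r : R -> config) : Prop :=
  exists (n : V3) (c : R), n <> vzero /\
    forall t, 0 <= t -> forall i, (i < N)%nat -> vdot n (r t i) = c.

(* A time t0 with g = W(L, T) makes the configuration there a minimiser of g at fixed L and T.
   For any configuration and mu = 1/g,
     sum_i m_i |v_i - mu L x r_i|^2 + mu^2 sum_i m_i (L.r_i)^2 = 2T - |L|^2/g,
   so |L|^2 <= 2Tg, while collinear configurations realise every g > 0 with |L|^2 <= 2Tg.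
   Hence a minimiser has L <> 0 and |L|^2 = 2Tg, and then L.r_i = L.v_i = 0 for all i.
   Along the motion, E = sum_i (L.r_i)^2 + (L.v_i)^2 satisfies |E'| <= K E: the component of
   the force along L is a combination of the differences L.r_j - L.r_i whose coefficients
   are bounded because mutual distances stay >= C1.  Gronwall's inequality propagates
   E(t0) = 0 to all t >= 0, so every particle stays in the plane orthogonal to L. *)

From Stdlib Require Import Reals Lra Lia List Psatz.
From Coquelicot Require Import Coquelicot.
Open Scope R_scope.

(** * Finite sums and vectors *)

Lemma fold_right_Rplus_init (l : list R) (a : R) :
  fold_right Rplus a l = fold_right Rplus 0 l + a.
Proof. induction l as [|x l IH]; simpl; [ring | rewrite IH; ring]. Qed.

Lemma sumR_S n f : sumR (S n) f = sumR n f + f n.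
Proof.
  unfold sumR. rewrite seq_S, map_app, fold_right_app. simpl.
  rewrite fold_right_Rplus_init. ring.
Qed.

Lemma sumR_ext n f g : (forall i, (i < n)%nat -> f i = g i) -> sumR n f = sumR n g.
Proof.
  induction n as [|n IH]; intros H; [reflexivity|].
  rewrite !sumR_S, IH, H; auto; lia.
Qed.

Lemma sumR_plus n f g : sumR n (fun i => f i + g i) = sumR n f + sumR n g.
Proof. induction n as [|n IH]; [unfold sumR; simpl; ring | rewrite !sumR_S, IH; ring]. Qed.

Lemma sumR_mult_l n c f : sumR n (fun i => c * f i) = c * sumR n f.
Proof. induction n as [|n IH]; [unfold sumR; simpl; ring | rewrite !sumR_S, IH; ring]. Qed.

Lemma sumR_eq0 n f : (forall i, (i < n)%nat -> f i = 0) -> sumR n f = 0.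
Proof.
  intros H. rewrite (sumR_ext n f (fun i => 0 * f i)) by (intros i Hi; rewrite (H i Hi); ring).
  rewrite sumR_mult_l. ring.
Qed.

Lemma sumR_ge0 n f : (forall i, (i < n)%nat -> 0 <= f i) -> 0 <= sumR n f.
Proof.
  induction n as [|n IH]; intros H; [unfold sumR; simpl; lra|].
  rewrite sumR_S. assert (0 <= f n) by (apply H; lia).
  assert (0 <= sumR n f) by (apply IH; intros; apply H; lia). lra.
Qed.

Lemma sumR_ge_term n f k : (forall i, (i < n)%nat -> 0 <= f i) -> (k < n)%nat ->
  f k <= sumR n f.
Proof.
  induction n as [|n IH]; intros H Hk; [lia|].
  rewrite sumR_S.
  assert (0 <= sumR n f) by (apply sumR_ge0; intros; apply H; lia).
  assert (0 <= f n) by (apply H; lia).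
  destruct (Nat.eq_dec k n) as [->|Hkn]; [lra|].
  assert (f k <= sumR n f) by (apply IH; [intros; apply H|]; lia). lra.
Qed.

Lemma sumR_le0_ge0 n f : (forall i, (i < n)%nat -> 0 <= f i) -> sumR n f <= 0 ->
  forall k, (k < n)%nat -> f k = 0.
Proof.
  intros H Hs k Hk. pose proof (sumR_ge_term n f k H Hk). pose proof (H k Hk). lra.
Qed.

Lemma sumR_abs_le n f B : (forall i, (i < n)%nat -> Rabs (f i) <= B) ->
  Rabs (sumR n f) <= INR n * B.
Proof.
  induction n as [|n IH]; intros H.
  - unfold sumR; simpl. rewrite Rabs_R0. lra.
  - rewrite sumR_S, S_INR.
    assert (Rabs (sumR n f) <= INR n * B) by (apply IH; intros; apply H; lia).
    assert (Rabs (f n) <= B) by (apply H; lia).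
    pose proof (Rabs_triang (sumR n f) (f n)). lra.
Qed.

Lemma is_derive_sumR n (f : nat -> R -> R) (df : nat -> R) t :
  (forall i, (i < n)%nat -> is_derive (f i) t (df i)) ->
  is_derive (fun s => sumR n (fun i => f i s)) t (sumR n df).
Proof.
  induction n as [|n IH]; intros H.
  - apply (is_derive_ext (fun _ => 0)); [reflexivity|].
    apply (is_derive_const (V := R_NormedModule)).
  - apply (is_derive_ext (fun s => sumR n (fun i => f i s) + f n s)).
    + intros s; rewrite sumR_S; reflexivity.
    + rewrite sumR_S. apply (is_derive_plus (V := R_NormedModule)).
      * apply IH; intros; apply H; lia.
      * apply H; lia.
Qed.

Lemma filterlim_Rplus {T} {F : (T -> Prop) -> Prop} {FF : Filter F} (f g : T -> R) a b :
  filterlim f F (locally a) -> filterlim g F (locally b) ->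
  filterlim (fun x => f x + g x) F (locally (a + b)).
Proof.
  intros Hf Hg. eapply filterlim_comp_2; [exact Hf | exact Hg |].
  apply (filterlim_plus (V := R_NormedModule)).
Qed.

Lemma filterlim_Rmult {T} {F : (T -> Prop) -> Prop} {FF : Filter F} (f g : T -> R) a b :
  filterlim f F (locally a) -> filterlim g F (locally b) ->
  filterlim (fun x => f x * g x) F (locally (a * b)).
Proof.
  intros Hf Hg. eapply filterlim_comp_2; [exact Hf | exact Hg |].
  apply (filterlim_mult (K := R_AbsRing)).
Qed.

Lemma filterlim_sumR {T} {F : (T -> Prop) -> Prop} {FF : Filter F}
    n (f : nat -> T -> R) (a : nat -> R) :
  (forall i, (i < n)%nat -> filterlim (f i) F (locally (a i))) ->
  filterlim (fun s => sumR n (fun i => f i s)) F (locally (sumR n a)).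
Proof.
  induction n as [|n IH]; intros H.
  - apply (filterlim_ext (fun _ => 0)); [reflexivity|].
    apply filterlim_const.
  - apply (filterlim_ext (fun s => sumR n (fun i => f i s) + f n s)).
    + intros s; rewrite sumR_S; reflexivity.
    + rewrite sumR_S. apply filterlim_Rplus.
      * apply IH; intros; apply H; lia.
      * apply H; lia.
Qed.

Lemma V3_eq (a b : V3) : vx a = vx b -> vy a = vy b -> vz a = vz b -> a = b.
Proof. destruct a, b; simpl; intros; subst; reflexivity. Qed.

Lemma fold_right_vadd_init (l : list V3) (a : V3) :
  fold_right vadd a l = vadd (fold_right vadd vzero l) a.
Proof.
  induction l as [|x l IH]; simpl; [|rewrite IH]; apply V3_eq; simpl; ring.
Qed.

Lemma sumV_S n f : sumV (S n) f = vadd (sumV n f) (f n).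
Proof.
  unfold sumV. rewrite seq_S, map_app, fold_right_app. simpl.
  rewrite fold_right_vadd_init. apply V3_eq; simpl; ring.
Qed.

Lemma sumV_ext n f g : (forall i, (i < n)%nat -> f i = g i) -> sumV n f = sumV n g.
Proof.
  induction n as [|n IH]; intros H; [reflexivity|].
  rewrite !sumV_S, IH, H; auto; lia.
Qed.

Lemma vdot_sumV a n f : vdot a (sumV n f) = sumR n (fun i => vdot a (f i)).
Proof.
  induction n as [|n IH]; [unfold vdot, sumV, sumR; simpl; ring|].
  rewrite sumV_S, sumR_S, <- IH. unfold vdot, vadd; simpl; ring.
Qed.

Lemma sumV_scal_l n f a : sumV n (fun i => vscal (f i) a) = vscal (sumR n f) a.
Proof.
  induction n as [|n IH]; [apply V3_eq; unfold sumV, sumR; simpl; ring|].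
  rewrite sumV_S, sumR_S, IH. apply V3_eq; simpl; ring.
Qed.

Lemma vdot_self_ge0 a : 0 <= vdot a a.
Proof. unfold vdot. nra. Qed.

Lemma vdot_self_eq0 a : vdot a a = 0 -> a = vzero.
Proof.
  destruct a as [x y z]; unfold vdot; simpl; intros H.
  assert (x = 0) by nra. assert (y = 0) by nra. assert (z = 0) by nra.
  subst; reflexivity.
Qed.

Lemma vdot_self_gt0 a : a <> vzero -> 0 < vdot a a.
Proof.
  intros Ha. pose proof (vdot_self_ge0 a).
  destruct (Req_dec (vdot a a) 0) as [Haa|Haa]; [now apply vdot_self_eq0 in Haa | lra].
Qed.

Lemma exists_orthogonal (a : V3) : exists u, vdot u a = 0 /\ u <> vzero.
Proof.
  destruct (Req_dec (vy a) 0) as [Hy|Hy]; [destruct (Req_dec (vz a) 0) as [Hz|Hz]|].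
  - exists (mkV3 0 1 0). split; [unfold vdot; simpl; rewrite Hy; ring|].
    intros H; injection H; lra.
  - exists (mkV3 0 (vz a) (- vy a)). split; [unfold vdot; simpl; ring|].
    intros H; injection H; lra.
  - exists (mkV3 0 (vz a) (- vy a)). split; [unfold vdot; simpl; ring|].
    intros H; injection H; lra.
Qed.

Lemma is_derive_vdot_l (a : V3) f t d : is_derive_V3 f t d ->
  is_derive (fun s => vdot a (f s)) t (vdot a d).
Proof.
  intros [Hx [Hy Hz]]. unfold vdot.
  apply (is_derive_scal _ _ (vx a)) in Hx.
  apply (is_derive_scal _ _ (vy a)) in Hy.
  apply (is_derive_scal _ _ (vz a)) in Hz.
  exact (is_derive_plus _ _ _ _ _ (is_derive_plus _ _ _ _ _ Hx Hy) Hz).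
Qed.

Lemma filterlim_vdot_l (a : V3) f t : right_cont_V3 f t ->
  filterlim (fun s => vdot a (f s)) (at_right t) (locally (vdot a (f t))).
Proof.
  intros [Hx [Hy Hz]]. unfold vdot.
  repeat apply filterlim_Rplus; apply filterlim_Rmult; auto; apply filterlim_const.
Qed.

Lemma is_derive_square (f : R -> R) t df : is_derive f t df ->
  is_derive (fun s => f s * f s) t (2 * f t * df).
Proof.
  intros H.
  replace (2 * f t * df) with (plus (mult df (f t)) (mult (f t) df))
    by (unfold plus, mult; simpl; ring).
  exact (is_derive_mult _ _ t _ _ H H ltac:(intros; apply Rmult_comm)).
Qed.

(** * Gronwall's inequality *)

Lemma nonincreasing_of_derive_nonpos (h dh : R -> R) s t :
  (forall x, 0 < x -> is_derive h x (dh x)) -> (forall x, 0 < x -> dh x <= 0) ->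
  0 < s -> s <= t -> h t <= h s.
Proof.
  intros Hd Hneg Hs Hst.
  destruct (MVT_gen h s t dh) as [c [Hc Heq]].
  - intros x Hx. apply Hd. rewrite Rmin_left, Rmax_right in Hx; lra.
  - intros x Hx. apply continuity_pt_filterlim.
    apply (ex_derive_continuous (K := R_AbsRing) (V := R_NormedModule)).
    exists (dh x). apply Hd. rewrite Rmin_left, Rmax_right in Hx; lra.
  - rewrite Rmin_left, Rmax_right in Hc by lra.
    assert (dh c <= 0) by (apply Hneg; lra). nra.
Qed.

Lemma is_derive_mult_exp (f : R -> R) df c x : is_derive f x df ->
  is_derive (fun y => f y * exp (c * y)) x ((df + c * f x) * exp (c * x)).
Proof.
  intros Hf.
  assert (Hexp : is_derive (fun y => exp (c * y)) x (c * exp (c * x)))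
    by (auto_derive; [exact I | ring]).
  replace ((df + c * f x) * exp (c * x))
    with (plus (mult df (exp (c * x))) (mult (f x) (c * exp (c * x))))
    by (unfold plus, mult; simpl; ring).
  exact (is_derive_mult _ _ x _ _ Hf Hexp ltac:(intros; apply Rmult_comm)).
Qed.

Section Gronwall.

Variables (E dE : R -> R) (K : R).
Hypothesis HK : 0 <= K.
Hypothesis HdE : forall t, 0 < t -> is_derive E t (dE t).
Hypothesis HdE_le : forall t, 0 < t -> Rabs (dE t) <= K * E t.
Hypothesis HE_ge0 : forall t, 0 < t -> 0 <= E t.
Hypothesis HE_right0 : filterlim E (at_right 0) (locally (E 0)).

Lemma gronwall_forward s t : 0 < s -> s <= t -> E t * exp (- K * t) <= E s * exp (- K * s).
Proof.
  intros Hs Hst.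
  apply (nonincreasing_of_derive_nonpos (fun x => E x * exp (- K * x))
    (fun x => (dE x + - K * E x) * exp (- K * x))); auto.
  - intros x Hx. apply is_derive_mult_exp, HdE, Hx.
  - intros x Hx. pose proof (exp_pos (- K * x)).
    pose proof (proj1 (Rabs_le_between _ _) (HdE_le x Hx)). nra.
Qed.

Lemma gronwall_backward s t : 0 < s -> s <= t -> E s * exp (K * s) <= E t * exp (K * t).
Proof.
  intros Hs Hst. apply Ropp_le_cancel.
  apply (nonincreasing_of_derive_nonpos (fun x => - (E x * exp (K * x)))
    (fun x => - ((dE x + K * E x) * exp (K * x)))); auto.
  - intros x Hx. apply (is_derive_opp (fun y => E y * exp (K * y))).
    apply is_derive_mult_exp, HdE, Hx.
  - intros x Hx. pose proof (exp_pos (K * x)).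
    pose proof (proj1 (Rabs_le_between _ _) (HdE_le x Hx)). nra.
Qed.

Lemma gronwall_vanish_pos t0 : 0 < t0 -> E t0 = 0 -> forall t, 0 < t -> E t = 0.
Proof.
  intros Ht0 HE0 t Ht. pose proof (HE_ge0 t Ht).
  destruct (Rle_dec t0 t) as [Hle|Hlt].
  - pose proof (gronwall_forward t0 t Ht0 Hle). pose proof (exp_pos (- K * t)).
    rewrite HE0 in *. nra.
  - pose proof (gronwall_backward t t0 Ht ltac:(lra)). pose proof (exp_pos (K * t)).
    rewrite HE0 in *. nra.
Qed.

(* For 0 < s < t, E t e^{-K t} <= E s e^{-K s} <= E s, and E s -> 0 as s -> 0+. *)
Lemma gronwall_vanish_right0 : E 0 = 0 -> forall t, 0 < t -> E t = 0.
Proof.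
  intros HE0 t Ht. pose proof (HE_ge0 t Ht). pose proof (exp_pos (- K * t)).
  assert (Hnear : at_right 0 (fun s => E t * exp (- K * t) <= E s)).
  { exists (mkposreal t Ht). intros s Hs Hs0.
    unfold ball in Hs; simpl in Hs; unfold AbsRing_ball, abs, minus, plus, opp in Hs; simpl in Hs.
    apply Rabs_lt_between in Hs.
    pose proof (gronwall_forward s t Hs0 ltac:(lra)). pose proof (HE_ge0 s Hs0).
    assert (exp (- K * s) <= 1).
    { rewrite <- exp_0. destruct (Req_dec K 0) as [->|HK0]; [right; f_equal; ring|].
      left. apply exp_increasing. nra. }
    nra. }
  assert (Hle : Rbar_le (E t * exp (- K * t)) (E 0)).
  { apply (filterlim_le (F := at_right 0) _ _ _ _ Hnear).
    - apply filterlim_const.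
    - exact HE_right0. }
  rewrite HE0 in Hle. simpl in Hle. nra.
Qed.

Lemma gronwall_vanish t0 : 0 <= t0 -> E t0 = 0 -> forall t, 0 <= t -> E t = 0.
Proof.
  intros Ht0 HE0.
  assert (Hpos : forall t, 0 < t -> E t = 0).
  { destruct (Rle_lt_or_eq_dec _ _ Ht0) as [Hlt | <-].
    - exact (gronwall_vanish_pos t0 Hlt HE0).
    - exact (gronwall_vanish_right0 HE0). }
  intros t Ht. destruct (Rle_lt_or_eq_dec _ _ Ht) as [Hlt | <-]; [exact (Hpos t Hlt)|].
  apply (filterlim_locally_unique E (F := at_right 0)); [exact HE_right0|].
  apply (filterlim_ext_loc (fun _ => 0)); [|apply filterlim_const].
  exists (mkposreal 1 Rlt_0_1). intros s _ Hs. symmetry. exact (Hpos s Hs).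
Qed.

End Gronwall.

(** * Minimisers of g at fixed angular momentum and kinetic energy *)

Definition line_config (p : V3) : config := fun i => vscal (INR i + 1) p.

Definition line_weight (N : nat) (m : nat -> R) : R :=
  sumR N (fun i => m i * (INR i + 1) ^ 2).

Lemma line_weight_pos N m : (1 <= N)%nat -> (forall i, (i < N)%nat -> 0 < m i) ->
  0 < line_weight N m.
Proof.
  intros HN Hm.
  assert (Hnn : forall i, (i < N)%nat -> 0 <= m i * (INR i + 1) ^ 2).
  { intros i Hi. pose proof (Hm i Hi). pose proof (pos_INR i). nra. }
  pose proof (sumR_ge_term N _ 0 Hnn ltac:(lia)). pose proof (Hm 0%nat ltac:(lia)).
  unfold line_weight. simpl in *. lra.
Qed.

Lemma line_config_in_R3 N p : p <> vzero -> in_R3 N (line_config p).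
Proof.
  intros Hp i j _ _ Hij Heq. apply Hij, INR_eq.
  assert (Hdot : vdot p (line_config p i) = vdot p (line_config p j)) by now rewrite Heq.
  unfold line_config, vdot, vscal in Hdot; simpl in Hdot.
  pose proof (vdot_self_gt0 p Hp). unfold vdot in *.
  apply (Rmult_eq_reg_r (vx p * vx p + vy p * vy p + vz p * vz p)); nra.
Qed.

Lemma angmom_line_config N m p q :
  angmom N m (line_config p) (line_config q) = vscal (line_weight N m) (vcross p q).
Proof.
  unfold angmom, line_weight. rewrite <- sumV_scal_l.
  apply sumV_ext. intros i _. apply V3_eq; unfold line_config; simpl; ring.
Qed.

Lemma kinetic_line_config N m q :
  kinetic N m (line_config q) = / 2 * (line_weight N m * vdot q q).
Proof.
  unfold kinetic, line_weight. f_equal. rewrite Rmult_comm, <- sumR_mult_l.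
  apply sumR_ext. intros i _. unfold line_config, vdot; simpl; ring.
Qed.

Lemma gmom_line_config N m p : gmom N m (line_config p) = line_weight N m * vdot p p.
Proof.
  unfold gmom, line_weight. rewrite Rmult_comm, <- sumR_mult_l.
  apply sumR_ext. intros i _. unfold line_config, vdot; simpl; ring.
Qed.

Lemma vcross_orthogonal_frame L u a b c : vdot u L = 0 ->
  vcross (vscal a u) (vadd (vscal b (vcross L u)) (vscal c u)) = vscal (a * b * vdot u u) L.
Proof.
  intros HuL.
  transitivity (vadd (vscal (a * b * vdot u u) L) (vscal (- a * b * vdot u L) u)).
  - apply V3_eq; unfold vdot; simpl; ring.
  - rewrite HuL. apply V3_eq; simpl; ring.
Qed.

Lemma vdot_orthogonal_frame L u b c : vdot u L = 0 ->
  vdot (vadd (vscal b (vcross L u)) (vscal c u)) (vadd (vscal b (vcross L u)) (vscal c u)) =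
  vdot u u * (b * b * vdot L L + c * c).
Proof.
  intros HuL.
  transitivity (vdot u u * (b * b * vdot L L + c * c) - b * b * vdot u L ^ 2).
  - unfold vdot; simpl; ring.
  - rewrite HuL. ring.
Qed.

(* Witness: the collinear configuration with p = a u and q = b (L x u) + c u, u orthogonal
   to L; a fixes g, then b fixes L, and c supplies the remaining kinetic energy. *)
Lemma exists_config_of_angmom_sq_le N m L T g :
  (1 <= N)%nat -> (forall i, (i < N)%nat -> 0 < m i) ->
  0 < g -> vdot L L <= 2 * T * g ->
  exists r v, in_Omega N r v /\ angmom N m r v = L /\ kinetic N m v = T /\ gmom N m r = g.
Proof.
  intros HN Hm Hg HLT.
  destruct (exists_orthogonal L) as [u [HuL Hu]].
  pose proof (vdot_self_gt0 u Hu) as Huu.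
  pose proof (line_weight_pos N m HN Hm) as HW.
  set (k := line_weight N m * vdot u u).
  assert (Hk : 0 < k) by (apply Rmult_lt_0_compat; lra).
  set (a := sqrt (g / k)).
  assert (Ha2 : a * a = g / k) by (apply sqrt_sqrt, Rlt_le, Rdiv_lt_0_compat; lra).
  assert (Ha : 0 < a) by (apply sqrt_lt_R0, Rdiv_lt_0_compat; lra).
  set (b := / (a * k)).
  assert (Hb2 : b * b = / (g * k)).
  { unfold b. replace (/ (a * k) * / (a * k)) with (/ (a * a * k * k)) by (field; lra).
    rewrite Ha2. field. lra. }
  set (c := sqrt ((2 * T * g - vdot L L) / (g * k))).
  assert (Hc2 : c * c = (2 * T * g - vdot L L) / (g * k)).
  { apply sqrt_sqrt, Rdiv_le_0_compat; [lra | apply Rmult_lt_0_compat; lra]. }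
  exists (line_config (vscal a u)), (line_config (vadd (vscal b (vcross L u)) (vscal c u))).
  repeat split.
  - apply line_config_in_R3. intros H0. apply Hu.
    replace u with (vscal (/ a) (vscal a u)) by (apply V3_eq; simpl; field; lra).
    rewrite H0. apply V3_eq; simpl; ring.
  - rewrite angmom_line_config, vcross_orthogonal_frame by exact HuL.
    apply V3_eq; simpl; unfold b, k; field; split; lra.
  - rewrite kinetic_line_config, vdot_orthogonal_frame, Hb2, Hc2 by exact HuL. unfold k. field. lra.
  - rewrite gmom_line_config.
    replace (vdot (vscal a u) (vscal a u)) with (a * a * vdot u u) by (unfold vdot; simpl; ring).
    rewrite Ha2. unfold k. field. split; lra.
Qed.

Definition rotation_defect (m : nat -> R) (L : V3) (mu : R) (r v : config) (i : nat) : R :=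
  m i * vdot (vsub (v i) (vscal mu (vcross L (r i)))) (vsub (v i) (vscal mu (vcross L (r i))))
  + mu ^ 2 * (m i * vdot L (r i) ^ 2).

Lemma rotation_defect_ge0 m L mu r v i : 0 < m i -> 0 <= rotation_defect m L mu r v i.
Proof.
  intros Hmi. unfold rotation_defect.
  pose proof (vdot_self_ge0 (vsub (v i) (vscal mu (vcross L (r i))))).
  assert (0 <= m i * vdot L (r i) ^ 2) by (apply Rmult_le_pos; [lra | apply pow2_ge_0]).
  pose proof (pow2_ge_0 mu). nra.
Qed.

Lemma rotation_defect_eq0 m L mu r v i : 0 < m i -> mu <> 0 ->
  rotation_defect m L mu r v i = 0 -> vdot L (r i) = 0 /\ vdot L (v i) = 0.
Proof.
  intros Hmi Hmu H0. unfold rotation_defect in H0.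
  set (d := vsub (v i) (vscal mu (vcross L (r i)))) in H0.
  pose proof (vdot_self_ge0 d).
  assert (Hmu2 : 0 < mu ^ 2) by (apply pow2_gt_0; exact Hmu).
  pose proof (pow2_ge_0 (vdot L (r i))).
  assert (0 <= m i * vdot L (r i) ^ 2) by (apply Rmult_le_pos; lra).
  assert (0 <= m i * vdot d d) by (apply Rmult_le_pos; lra).
  assert (Hz : m i * vdot L (r i) ^ 2 = 0) by nra.
  assert (Hd : d = vzero) by (apply vdot_self_eq0; nra).
  split.
  { apply Rsqr_0_uniq. unfold Rsqr. nra. }
  replace (v i) with (vadd d (vscal mu (vcross L (r i)))) by (apply V3_eq; simpl; ring).
  rewrite Hd. unfold vdot; simpl; ring.
Qed.

(* |v|^2 - 2 mu v.(L x r) + mu^2 |L x r|^2, with v.(L x r) = L.(r x v) and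
   |L x r|^2 = |L|^2 |r|^2 - (L.r)^2. *)
Lemma sum_rotation_defect N m r v mu :
  sumR N (rotation_defect m (angmom N m r v) mu r v) =
  2 * kinetic N m v - 2 * mu * vdot (angmom N m r v) (angmom N m r v)
  + mu ^ 2 * vdot (angmom N m r v) (angmom N m r v) * gmom N m r.
Proof.
  set (L := angmom N m r v).
  rewrite (sumR_ext N _ (fun i => (m i * vdot (v i) (v i)
        + (-2 * mu) * vdot L (vscal (m i) (vcross (r i) (v i))))
        + (mu ^ 2 * vdot L L) * (m i * vdot (r i) (r i)))).
  - rewrite !sumR_plus, !sumR_mult_l, <- vdot_sumV.
    unfold kinetic, gmom. fold (angmom N m r v). fold L. field.
  - intros i _. unfold rotation_defect, vdot, vsub, vscal, vcross; simpl. ring.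
Qed.

Lemma gmom_pos N m r : (2 <= N)%nat -> (forall i, (i < N)%nat -> 0 < m i) ->
  in_R3 N r -> 0 < gmom N m r.
Proof.
  intros HN Hm Hr.
  assert (Hnn : forall i, (i < N)%nat -> 0 <= m i * vdot (r i) (r i)).
  { intros i Hi. pose proof (Hm i Hi). pose proof (vdot_self_ge0 (r i)). nra. }
  assert (Hk : exists k, (k < N)%nat /\ r k <> vzero).
  { destruct (Req_dec (vdot (r 0%nat) (r 0%nat)) 0) as [H0|H0].
    - exists 1%nat. split; [lia|]. intros H1.
      apply (Hr 0%nat 1%nat); try lia. rewrite H1. now apply vdot_self_eq0.
    - exists 0%nat. split; [lia|]. intros H1. apply H0. rewrite H1. unfold vdot; simpl; ring. }
  destruct Hk as [k [Hk Hrk]].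
  pose proof (sumR_ge_term N _ k Hnn Hk). pose proof (Hm k Hk).
  pose proof (vdot_self_gt0 _ Hrk). unfold gmom. nra.
Qed.

Lemma angmom_sq_le N m r v : (forall i, (i < N)%nat -> 0 < m i) -> 0 < gmom N m r ->
  vdot (angmom N m r v) (angmom N m r v) <= 2 * kinetic N m v * gmom N m r.
Proof.
  intros Hm Hg.
  assert (Hge0 : 0 <= sumR N (rotation_defect m (angmom N m r v) (/ gmom N m r) r v))
    by (apply sumR_ge0; intros i Hi; apply rotation_defect_ge0, Hm, Hi).
  rewrite sum_rotation_defect in Hge0.
  set (L := angmom N m r v) in *. set (T := kinetic N m v) in *. set (g := gmom N m r) in *.
  apply (Rmult_le_compat_r g) in Hge0; [|lra].
  replace ((2 * T - 2 * / g * vdot L L + (/ g) ^ 2 * vdot L L * g) * g)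
    with (2 * T * g - vdot L L) in Hge0 by (field; lra).
  lra.
Qed.

Lemma angmom_sq_eq_orthogonal N m r v :
  (forall i, (i < N)%nat -> 0 < m i) -> 0 < gmom N m r ->
  vdot (angmom N m r v) (angmom N m r v) = 2 * kinetic N m v * gmom N m r ->
  forall i, (i < N)%nat -> vdot (angmom N m r v) (r i) = 0 /\ vdot (angmom N m r v) (v i) = 0.
Proof.
  intros Hm Hg Heq i Hi.
  assert (Hmu : / gmom N m r <> 0) by (apply Rinv_neq_0_compat; lra).
  apply (rotation_defect_eq0 m _ (/ gmom N m r)); auto.
  revert i Hi. apply sumR_le0_ge0.
  - intros i Hi. apply rotation_defect_ge0, Hm, Hi.
  - rewrite sum_rotation_defect, Heq. right. field. lra.
Qed.

Lemma minimizer_orthogonal N m r v :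
  (2 <= N)%nat -> (forall i, (i < N)%nat -> 0 < m i) -> in_R3 N r ->
  (forall r' v', in_Omega N r' v' -> angmom N m r' v' = angmom N m r v ->
     kinetic N m v' = kinetic N m v -> gmom N m r <= gmom N m r') ->
  angmom N m r v <> vzero /\
  forall i, (i < N)%nat -> vdot (angmom N m r v) (r i) = 0 /\ vdot (angmom N m r v) (v i) = 0.
Proof.
  intros HN Hm Hr Hmin.
  pose proof (gmom_pos N m r HN Hm Hr) as Hg.
  pose proof (angmom_sq_le N m r v Hm Hg) as Hle.
  set (L := angmom N m r v) in *. set (T := kinetic N m v) in *. set (g := gmom N m r) in *.
  pose proof (vdot_self_ge0 L) as HLL.
  assert (Hbelow : forall g', 0 < g' -> vdot L L <= 2 * T * g' -> g <= g').
  { intros g' Hg' HLT.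
    destruct (exists_config_of_angmom_sq_le N m L T g' ltac:(lia) Hm Hg' HLT)
      as [r' [v' [HO [HL [HT <-]]]]].
    exact (Hmin r' v' HO HL HT). }
  assert (HL0 : L <> vzero).
  { intros HL0. assert (HLL0 : vdot L L = 0) by (rewrite HL0; unfold vdot; simpl; ring).
    assert (g <= g / 2) by (apply Hbelow; nra). lra. }
  pose proof (vdot_self_gt0 L HL0) as HLpos.
  split; [exact HL0|].
  apply angmom_sq_eq_orthogonal; auto.
  destruct (Rle_lt_or_eq_dec _ _ Hle) as [Hlt|]; [exfalso|assumption].
  assert (HT : 0 < T) by nra.
  assert (Hg' : 0 < vdot L L / (2 * T)) by (apply Rdiv_lt_0_compat; lra).
  assert (Hle' : g <= vdot L L / (2 * T)) by (apply Hbelow; [exact Hg' | right; field; lra]).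
  apply Rle_div_r in Hle'; lra.
Qed.

Lemma Wfun_le_gmom N m L T w r v : Wfun N m L T = Finite w ->
  in_Omega N r v -> angmom N m r v = L -> kinetic N m v = T -> w <= gmom N m r.
Proof.
  intros HW HO HL HT. unfold Wfun in HW.
  destruct (Glb_Rbar_correct (fun x => exists r v : config, in_Omega N r v /\
     angmom N m r v = L /\ kinetic N m v = T /\ x = gmom N m r)) as [Hlb _].
  rewrite HW in Hlb. apply (Hlb (gmom N m r)). now exists r, v.
Qed.

(** * Motion across the plane orthogonal to L *)

Definition out_of_plane (N : nat) (L : V3) (r v : R -> config) (t : R) : R :=
  sumR N (fun i => vdot L (r t i) * vdot L (r t i) + vdot L (v t i) * vdot L (v t i)).

Lemma out_of_plane_ge0 N L r v t : 0 <= out_of_plane N L r v t.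
Proof. apply sumR_ge0. intros i _. nra. Qed.

Lemma sq_le_out_of_plane N L r v t i : (i < N)%nat ->
  vdot L (r t i) * vdot L (r t i) + vdot L (v t i) * vdot L (v t i) <= out_of_plane N L r v t.
Proof.
  intros Hi.
  apply (sumR_ge_term N (fun j => vdot L (r t j) * vdot L (r t j) + vdot L (v t j) * vdot L (v t j)));
    [intros; nra | exact Hi].
Qed.

Lemma out_of_plane_eq0_iff N L r v t :
  out_of_plane N L r v t = 0 <->
  forall i, (i < N)%nat -> vdot L (r t i) = 0 /\ vdot L (v t i) = 0.
Proof.
  split.
  - intros HE i Hi. pose proof (sq_le_out_of_plane N L r v t i Hi).
    pose proof (Rle_0_sqr (vdot L (r t i))). pose proof (Rle_0_sqr (vdot L (v t i))).
    unfold Rsqr in *. split; apply Rsqr_0_uniq; unfold Rsqr; nra.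
  - intros H0. apply sumR_eq0. intros i Hi. destruct (H0 i Hi) as [-> ->]. ring.
Qed.

Lemma vdot_force N gamma m (r : config) L i :
  vdot L (force N gamma m r i) =
  sumR N (fun j => if Nat.eqb j i then 0 else
    gamma * m i * m j / vnorm (vsub (r j) (r i)) ^ 3 * (vdot L (r j) - vdot L (r i))).
Proof.
  unfold force. rewrite vdot_sumV. apply sumR_ext. intros j _.
  destruct (Nat.eqb j i); unfold vdot, vscal, vsub; simpl; ring.
Qed.

Lemma div_cube_le a C d : 0 <= a -> 0 < C -> C <= d -> 0 <= a / d ^ 3 <= a / C ^ 3.
Proof.
  intros Ha HC HCd.
  assert (HC3 : 0 < C ^ 3) by (apply pow_lt; lra).
  assert (HCd3 : C ^ 3 <= d ^ 3) by (apply pow_incr; lra).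
  split.
  - apply Rdiv_le_0_compat; lra.
  - apply Rmult_le_compat_l; [lra|]. apply Rinv_le_contravar; lra.
Qed.

Lemma abs_mult_sub_le x a b E : x * x <= E -> a * a <= E -> b * b <= E ->
  Rabs (x * (a - b)) <= 2 * E.
Proof.
  intros Hx Ha Hb.
  pose proof (Rle_0_sqr (x + a)). pose proof (Rle_0_sqr (x - b)).
  pose proof (Rle_0_sqr (x - a)). pose proof (Rle_0_sqr (x + b)). unfold Rsqr in *.
  apply Rabs_le. split; nra.
Qed.

Section OutOfPlane.

Variables (N : nat) (m : nat -> R) (gamma : R) (r v : R -> config) (L : V3) (C1 : R).
Hypothesis Hm : forall i, (i < N)%nat -> 0 < m i.
Hypothesis Hgamma : 0 < gamma.
Hypothesis Hsol : is_solution N gamma m r v.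
Hypothesis HC1 : 0 < C1.
Hypothesis Hsep : forall t, 0 <= t -> forall i j, (i < N)%nat -> (j < N)%nat -> i <> j ->
  C1 <= vnorm (vsub (r t j) (r t i)).

Let z i t := vdot L (r t i).
Let w i t := vdot L (v t i).
Let E := out_of_plane N L r v.
Let dE t := sumR N (fun i => 2 * z i t * w i t + 2 * w i t * (/ m i * vdot L (force N gamma m (r t) i))).
Let M := sumR N m.
Let K := INR N * (1 + 4 * INR N * gamma * M / C1 ^ 3).

Lemma out_of_plane_derive t : 0 < t -> is_derive E t (dE t).
Proof.
  intros Ht. apply (is_derive_sumR N (fun i s => z i s * z i s + w i s * w i s)).
  intros i Hi. destruct (proj1 (proj2 Hsol) i Hi t Ht) as [Hr Hv].
  apply (is_derive_plus (V := R_NormedModule)); apply is_derive_square.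
  - apply is_derive_vdot_l, Hr.
  - apply (is_derive_ext (fun s => / m i * vdot L (vscal (m i) (v s i)))).
    + intros s. pose proof (Hm i Hi). unfold w, vdot, vscal; simpl. field. lra.
    + apply is_derive_scal, is_derive_vdot_l, Hv.
Qed.

Lemma mult_vdot_force_le i t : 0 < t -> (i < N)%nat ->
  Rabs (w i t * vdot L (force N gamma m (r t) i)) <=
  INR N * (gamma * m i * M / C1 ^ 3 * (2 * E t)).
Proof.
  intros Ht Hi. unfold w, E. rewrite vdot_force, <- sumR_mult_l. apply sumR_abs_le. intros j Hj.
  pose proof (Hm i Hi). pose proof (Hm j Hj).
  pose proof (out_of_plane_ge0 N L r v t).
  assert (HM : m j <= M) by (apply (sumR_ge_term N m j); auto; intros; apply Rlt_le, Hm; auto).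
  assert (HB : 0 <= gamma * m i * M / C1 ^ 3).
  { apply (div_cube_le _ C1 C1); try lra. apply Rmult_le_pos; [apply Rmult_le_pos|]; lra. }
  destruct (Nat.eqb_spec j i) as [_ | Hji].
  - rewrite Rmult_0_r, Rabs_R0. apply Rmult_le_pos; [exact HB | lra].
  - set (d := vnorm (vsub (r t j) (r t i))).
    destruct (div_cube_le (gamma * m i * m j) C1 d) as [Hc0 Hc1];
      [apply Rmult_le_pos; [apply Rmult_le_pos|]; lra | lra | apply Hsep; auto; lra |].
    assert (Hc2 : gamma * m i * m j / C1 ^ 3 <= gamma * m i * M / C1 ^ 3).
    { apply Rmult_le_compat_r; [apply Rlt_le, Rinv_0_lt_compat, pow_lt; lra|].
      apply Rmult_le_compat_l; [apply Rmult_le_pos|]; lra. }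
    rewrite Rmult_comm, Rmult_assoc, Rabs_mult, (Rabs_right (_ / _)) by lra.
    apply Rmult_le_compat; [lra | apply Rabs_pos | lra |].
    rewrite Rmult_comm. apply abs_mult_sub_le.
    + pose proof (sq_le_out_of_plane N L r v t i Hi). nra.
    + pose proof (sq_le_out_of_plane N L r v t j Hj). nra.
    + pose proof (sq_le_out_of_plane N L r v t i Hi). nra.
Qed.

Lemma out_of_plane_derive_le t : 0 < t -> Rabs (dE t) <= K * E t.
Proof.
  intros Ht. pose proof (out_of_plane_ge0 N L r v t) as HE.
  unfold dE, K. fold M.
  replace (INR N * (1 + 4 * INR N * gamma * M / C1 ^ 3) * E t)
    with (INR N * ((1 + 4 * INR N * gamma * M / C1 ^ 3) * E t)) by ring.
  apply sumR_abs_le. intros i Hi.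
  pose proof (Hm i Hi). pose proof (mult_vdot_force_le i t Ht Hi) as Hforce.
  pose proof (sq_le_out_of_plane N L r v t i Hi) as Hzw. fold (z i t) (w i t) E in Hzw.
  set (F := vdot L (force N gamma m (r t) i)) in *.
  assert (Habs1 : Rabs (2 * z i t * w i t) <= E t).
  { pose proof (Rle_0_sqr (z i t + w i t)). pose proof (Rle_0_sqr (z i t - w i t)).
    unfold Rsqr in *. apply Rabs_le. split; nra. }
  assert (Habs2 : Rabs (2 * w i t * (/ m i * F)) <= 4 * INR N * gamma * M / C1 ^ 3 * E t).
  { replace (2 * w i t * (/ m i * F)) with (2 / m i * (w i t * F)) by (field; lra).
    rewrite Rabs_mult, (Rabs_right (2 / m i)) by (apply Rle_ge, Rdiv_le_0_compat; lra).
    apply (Rmult_le_compat_l (2 / m i)) in Hforce; [|apply Rdiv_le_0_compat; lra].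
    eapply Rle_trans; [exact Hforce | right; field; lra]. }
  pose proof (Rabs_triang (2 * z i t * w i t) (2 * w i t * (/ m i * F))). lra.
Qed.

Lemma out_of_plane_right0 : filterlim E (at_right 0) (locally (E 0)).
Proof.
  apply (filterlim_sumR N (fun i s => z i s * z i s + w i s * w i s)).
  intros i Hi. destruct (proj2 (proj2 Hsol) i Hi) as [Hr Hv].
  apply filterlim_Rplus; apply filterlim_Rmult; apply filterlim_vdot_l; assumption.
Qed.

Lemma out_of_plane_vanish t0 : 0 <= t0 -> out_of_plane N L r v t0 = 0 ->
  forall t, 0 <= t -> out_of_plane N L r v t = 0.
Proof.
  apply (gronwall_vanish E dE K).
  - unfold K. apply Rmult_le_pos; [apply pos_INR|].
    assert (0 <= M) by (apply sumR_ge0; intros i Hi; apply Rlt_le, Hm, Hi).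
    assert (0 < C1 ^ 3) by (apply pow_lt, HC1).
    assert (0 <= 4 * INR N * gamma * M / C1 ^ 3); [|lra].
    apply Rdiv_le_0_compat; [|assumption].
    pose proof (pos_INR N). apply Rmult_le_pos; [|assumption]. nra.
  - exact out_of_plane_derive.
  - exact out_of_plane_derive_le.
  - intros t _. apply out_of_plane_ge0.
  - exact out_of_plane_right0.
Qed.

End OutOfPlane.

Theorem theorem11p1 (N : nat) (m : nat -> R) (gamma : R)
    (r v : R -> config) (t0 : R) :
  (2 <= N)%nat ->
  (forall i, (i < N)%nat -> 0 < m i) ->
  0 < gamma ->
  is_solution N gamma m r v ->
  stationary N r ->
  0 <= t0 ->
  Wfun N m (angmom N m (r t0) (v t0)) (kinetic N m (v t0)) = Finite (gmom N m (r t0)) ->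
  flat N r.
Proof.
  intros HN Hm Hgamma Hsol [C1 [C2 [HC1 [_ Hdist]]]] Ht0 HW.
  set (L := angmom N m (r t0) (v t0)) in HW.
  destruct (minimizer_orthogonal N m (r t0) (v t0) HN Hm (proj1 Hsol t0 Ht0))
    as [HL Hperp].
  { intros r' v' HO HL HT. exact (Wfun_le_gmom _ _ _ _ _ _ _ HW HO HL HT). }
  exists L, 0. split; [exact HL|].
  intros t Ht i Hi.
  assert (HE : out_of_plane N L r v t = 0).
  { apply (out_of_plane_vanish N m gamma r v L C1 Hm Hgamma Hsol HC1) with t0; auto.
    - intros s Hs j k Hj Hk Hjk. apply (Hdist s Hs j k Hj Hk Hjk).
    - apply out_of_plane_eq0_iff. exact Hperp. }
  exact (proj1 (proj1 (out_of_plane_eq0_iff N L r v t) HE i Hi)).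
Qed.
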